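(* Let $n\ge r\ge 1$ be integers and let $\overline{X}\in\mathcal{S}_{+}^{n,r}:=\mathbb{R}_{+}^{n\times r}\cap{\rm St}(n,r)$. Suppose that, in the case $n>r>1$, $\overline{X}$ has no zero rows. Define \[ \kappa:=\begin{cases}2.1\sqrt{n}&\text{if } n=r,\\ 1&\text{if } n>r=1,\\ \dfrac{2.1\sqrt{r}\,[1+3r(n-r)]}{\overline{X}_{i^*j^*}}&\text{if } n>r>1,\end{cases} \] where $\overline{X}_{i^*j^*}$ is the smallest nonzero entry of $\overline{X}$. Then there exists $\delta>0$ such that for all $X\in\mathbb{R}^{n\times r}$ with $\|X-\overline{X}\|_F\le\delta$, \[ {\rm dist}(X,\mathcal{S}_{+}^{n,r})\le(\kappa+1)\big[{\rm dist}(X,\mathbb{R}_{+}^{n\times r})+{\rm dist}(X,{\rm St}(n,r))\big]. \]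
   Context: ${\rm St}(n,r):=\{X\in\mathbb{R}^{n\times r}: X^\top X=I_r\}$ is the Stiefel manifold, $\mathbb{R}_{+}^{n\times r}$ is the cone of entrywise nonnegative $n\times r$ matrices, and $\mathcal{S}_{+}^{n,r}:=\mathbb{R}_{+}^{n\times r}\cap{\rm St}(n,r)$. For a closed set $\Omega\subset\mathbb{R}^{n\times r}$, ${\rm dist}(X,\Omega)=\inf_{Z\in\Omega}\|X-Z\|_F$, with $\|\cdot\|_F$ the Frobenius norm. *)

From HB Require Import structures.
From mathcomp Require Import all_boot all_order all_algebra.
From mathcomp Require Import all_classical all_reals.
Set Implicit Arguments. Unset Strict Implicit. Unset Printing Implicit Defensive.
Import Order.TTheory GRing.Theory Num.Theory.
Local Open Scope ring_scope.
Local Open Scope classical_set_scope.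

Definition frob (R : realType) (n r : nat) (A : 'M[R]_(n, r)) : R :=
  Num.sqrt (\sum_(i < n) \sum_(j < r) (A i j) ^+ 2).

Definition dist (R : realType) (n r : nat) (X : 'M[R]_(n, r))
    (Omega : set 'M[R]_(n, r)) : R :=
  inf [set frob (X - Z) | Z in Omega].

Definition stiefel (R : realType) (n r : nat) : set 'M[R]_(n, r) :=
  [set X | X^T *m X = 1%:M].

Definition nonneg_mx (R : realType) (n r : nat) : set 'M[R]_(n, r) :=
  [set X | forall i j, 0 <= X i j].

Definition nonneg_stiefel (R : realType) (n r : nat) : set 'M[R]_(n, r) :=
  @nonneg_mx R n r `&` @stiefel R n r.

Definition min_nonzero_entry (R : realType) (n r : nat) (X : 'M[R]_(n, r)) : R :=
  inf [set x : R | exists (i : 'I_n) (j : 'I_r), X i j != 0 /\ x = X i j].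

Definition kappa (R : realType) (n r : nat) (Xb : 'M[R]_(n, r)) : R :=
  if n == r then (21%:R / 10%:R) * Num.sqrt (n%:R)
  else if r == 1%N then 1
  else (21%:R / 10%:R) * Num.sqrt (r%:R) * (1 + 3%:R * r%:R * (n - r)%:R)
       / min_nonzero_entry Xb.

From HB Require Import structures.
From mathcomp Require Import all_boot all_order all_algebra.
From mathcomp Require Import all_classical all_reals.
From mathcomp Require Import ring lra.
Import Order.TTheory GRing.Theory Num.Theory.
Set Implicit Arguments. Unset Strict Implicit. Unset Printing Implicit Defensive.
Local Open Scope ring_scope.
Local Open Scope classical_set_scope.

(* The columns of Xb are nonnegative and orthonormal, so each row i of Xb has
   at most one nonzero entry, in a column col i.  For X near Xb let W be the
   nonnegative part of X and Y the matrix that keeps only the entries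
   W i (col i), each column rescaled to unit norm: Y lies in S_+ and
   ||X - Y||^2 = ||X - W||^2 + ||W - Y||^2.  Against any P in St(n, r),
   ||W - Y|| is controlled by the deviation of the column norms of W from 1,
   which is at most ||W - P||, and by the mass O of W off the support of Xb.
   The Gram matrix bounds O: when all W i (col i) are at least m,
   m^2 O <= ||W^T W - I||^2 <= (2 ||W - P|| + ||W - P||^2)^2.  Here m is the
   smallest nonzero entry of Xb (m = 1 when n = r), and O = 0 when r = 1. *)

Section SquareRoots.
Variable R : rcfType.
Implicit Types x y : R.

Lemma sqrtr_le x y : 0 <= y -> x <= y ^+ 2 -> Num.sqrt x <= y.
Proof.
move=> y_ge0 x_le; have [x_ge0|x_lt0] := leP 0 x; last by rewrite ltr0_sqrtr.
by rewrite -(ger0_norm y_ge0) -sqrtr_sqr ler_sqrt // sqr_ge0.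
Qed.

Lemma le_sqrtr x y : 0 <= x -> x ^+ 2 <= y -> x <= Num.sqrt y.
Proof.
move=> x_ge0 le_y; rewrite -(ger0_norm x_ge0) -sqrtr_sqr ler_sqrt //.
exact: le_trans (sqr_ge0 x) le_y.
Qed.

Lemma sqrtrD_le x y : 0 <= x -> 0 <= y ->
  Num.sqrt (x + y) <= Num.sqrt x + Num.sqrt y.
Proof.
move=> x_ge0 y_ge0; apply: sqrtr_le; first by rewrite addr_ge0 ?sqrtr_ge0.
rewrite sqrrD !sqr_sqrtr // -addrA lerD2l lerDr.
by rewrite mulrn_wge0 // mulr_ge0 ?sqrtr_ge0.
Qed.

End SquareRoots.

Section L2Norm.
Variables (R : rcfType) (T : finType).
Implicit Types (P : pred T) (f g : T -> R).

Definition l2norm P f := Num.sqrt (\sum_(t | P t) f t ^+ 2).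

Lemma sumr_sqr_ge0 P f : 0 <= \sum_(t | P t) f t ^+ 2.
Proof. by apply: sumr_ge0 => t _; rewrite sqr_ge0. Qed.

Lemma l2norm_ge0 P f : 0 <= l2norm P f.
Proof. exact: sqrtr_ge0. Qed.

Lemma l2norm_sqr P f : l2norm P f ^+ 2 = \sum_(t | P t) f t ^+ 2.
Proof. by rewrite sqr_sqrtr // sumr_sqr_ge0. Qed.

Lemma eq_l2norm P f g : (forall t, P t -> f t = g t) -> l2norm P f = l2norm P g.
Proof. by move=> eq_fg; congr Num.sqrt; apply: eq_bigr => t /eq_fg ->. Qed.

Lemma ler_l2norm P f g : (forall t, P t -> f t ^+ 2 <= g t ^+ 2) ->
  l2norm P f <= l2norm P g.
Proof. by move=> le_fg; rewrite ler_sqrt ?sumr_sqr_ge0 // ler_sum. Qed.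

Lemma CauchySchwarz_sum P f g :
  (\sum_(t | P t) f t * g t) ^+ 2 <=
  (\sum_(t | P t) f t ^+ 2) * (\sum_(t | P t) g t ^+ 2).
Proof.
pose D s t := f s ^+ 2 * g t ^+ 2 - f s * g s * (f t * g t).
have -> : (\sum_(t | P t) f t ^+ 2) * (\sum_(t | P t) g t ^+ 2) =
    (\sum_(t | P t) f t * g t) ^+ 2 + \sum_(s | P s) \sum_(t | P t) D s t.
  rewrite expr2 !mulr_suml -big_split /=; apply: eq_bigr => s _.
  by rewrite !mulr_sumr -big_split /=; apply: eq_bigr => t _; rewrite /D addrC subrK.
rewrite lerDl.
have : 0 <= \sum_(s | P s) \sum_(t | P t) (D s t + D t s).
  apply: sumr_ge0 => s _; apply: sumr_ge0 => t _.
  by rewrite (_ : _ + _ = (f s * g t - f t * g s) ^+ 2) ?sqr_ge0 // /D; ring.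
rewrite (eq_bigr _ (fun s _ => big_split _ _ _ _ _)) big_split /= exchange_big.
by rewrite -mulr2n pmulrn_lge0.
Qed.

Lemma l2normD P f g :
  l2norm P (fun t => f t + g t) <= l2norm P f + l2norm P g.
Proof.
apply: sqrtr_le; first by rewrite addr_ge0 ?l2norm_ge0.
have -> : \sum_(t | P t) (f t + g t) ^+ 2 =
    \sum_(t | P t) f t ^+ 2 + 2 * \sum_(t | P t) f t * g t + \sum_(t | P t) g t ^+ 2.
  rewrite mulr_sumr -!big_split /=; apply: eq_bigr => t _; ring.
rewrite sqrrD !l2norm_sqr lerD2r lerD2l mulr_natl lerMn2r orFb.
apply: le_trans (ler_norm _) _; rewrite -sqrtr_sqr /l2norm -sqrtrM ?sumr_sqr_ge0 //.
by rewrite ler_sqrt ?CauchySchwarz_sum // mulr_ge0 ?sumr_sqr_ge0.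
Qed.

Lemma l2normB P f g :
  `|l2norm P f - l2norm P g| <= l2norm P (fun t => f t - g t).
Proof.
have l2normBC : l2norm P (fun t => g t - f t) = l2norm P (fun t => f t - g t).
  by congr Num.sqrt; apply: eq_bigr => t _; rewrite -sqrrN opprB.
have le_l2norm h k : l2norm P h <= l2norm P (fun t => h t - k t) + l2norm P k.
  apply: le_trans (l2normD P (fun t => h t - k t) k).
  by rewrite /l2norm; under [in X in _ <= X]eq_bigr do rewrite subrK.
have := le_l2norm f g; have := le_l2norm g f; rewrite l2normBC ler_norml.
by move=> ? ?; apply/andP; split; lra.
Qed.

Lemma sumr_sqr_le P f : (forall t, P t -> 0 <= f t) ->
  \sum_(t | P t) f t ^+ 2 <= (\sum_(t | P t) f t) ^+ 2.
Proof.
move=> f_ge0; rewrite expr2 mulr_suml; apply: ler_sum => t Pt.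
rewrite expr2 ler_wpM2l ?f_ge0 // (bigD1 t) //= lerDl.
by apply: sumr_ge0 => s /andP[Ps _]; apply: f_ge0.
Qed.

End L2Norm.

Section StiefelColumns.
Variables (R : rcfType) (n r : nat) (P : 'M[R]_(n, r)).
Hypothesis PtP : P^T *m P = 1%:M.

Lemma stiefel_dot j k : \sum_i P i j * P i k = (j == k)%:R.
Proof.
have := congr1 (fun M : 'M[R]_r => M j k) PtP; rewrite !mxE => <-.
by apply: eq_bigr => i _; rewrite mxE.
Qed.

Lemma stiefel_col_sqr j : \sum_i P i j ^+ 2 = 1.
Proof.
have := stiefel_dot j j; rewrite eqxx -[RHS]/(true%:R) => <-.
by apply: eq_bigr.
Qed.

Lemma l2norm_stiefel_col j : l2norm predT (fun i => P i j) = 1.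
Proof. by rewrite /l2norm stiefel_col_sqr sqrtr1. Qed.

Lemma stiefel_entry_sqr_le1 i j : P i j ^+ 2 <= 1.
Proof.
by rewrite -(stiefel_col_sqr j) (bigD1 i) //= lerDl sumr_sqr_ge0.
Qed.

End StiefelColumns.

Lemma square_stiefel_row_sqr (R : rcfType) n r (P : 'M[R]_(n, r)) i :
  n = r -> P^T *m P = 1%:M -> \sum_j P i j ^+ 2 = 1.
Proof.
move=> nr; subst r => /mulmx1C PPt.
have PtTPt : P^T^T *m P^T = 1%:M by rewrite trmxK.
by rewrite -(stiefel_col_sqr PtTPt i); apply: eq_bigr => j _; rewrite mxE.
Qed.

Section Frobenius.
Variable R : realType.
Implicit Types n r k : nat.

Lemma frob_ge0 n r (A : 'M[R]_(n, r)) : 0 <= frob A.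
Proof. exact: sqrtr_ge0. Qed.

Lemma frob_sqr n r (A : 'M[R]_(n, r)) : frob A ^+ 2 = \sum_i \sum_j A i j ^+ 2.
Proof. by rewrite sqr_sqrtr // sumr_ge0 // => i _; apply: sumr_sqr_ge0. Qed.

Lemma frob_sqr_col n r (A : 'M[R]_(n, r)) : frob A ^+ 2 = \sum_j \sum_i A i j ^+ 2.
Proof. by rewrite frob_sqr exchange_big. Qed.

Lemma frob_l2norm n r (A : 'M[R]_(n, r)) :
  frob A = l2norm predT (fun p : 'I_n * 'I_r => A p.1 p.2).
Proof. by rewrite /frob pair_bigA. Qed.

Lemma frob_sqr_mxtrace n r (A : 'M[R]_(n, r)) : frob A ^+ 2 = \tr (A^T *m A).
Proof.
rewrite frob_sqr_col; apply: eq_bigr => j _; rewrite !mxE.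
by apply: eq_bigr => i _; rewrite mxE.
Qed.

Lemma frob_le n r (A B : 'M[R]_(n, r)) :
  (forall i j, A i j ^+ 2 <= B i j ^+ 2) -> frob A <= frob B.
Proof.
by move=> le_AB; rewrite !frob_l2norm; apply: ler_l2norm => p _; apply: le_AB.
Qed.

Lemma ler_frobD n r (A B : 'M[R]_(n, r)) : frob (A + B) <= frob A + frob B.
Proof.
rewrite !frob_l2norm; apply: le_trans (l2normD _ _ _).
by rewrite /l2norm; under eq_bigr do rewrite mxE.
Qed.

Lemma frobN n r (A : 'M[R]_(n, r)) : frob (- A) = frob A.
Proof. by apply/eqP; rewrite eq_le !frob_le // => i j; rewrite mxE sqrrN. Qed.

Lemma frob_distC n r (A B : 'M[R]_(n, r)) : frob (A - B) = frob (B - A).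
Proof. by rewrite -frobN opprB. Qed.

Lemma frob_trmx n r (A : 'M[R]_(n, r)) : frob A^T = frob A.
Proof.
rewrite /frob exchange_big; congr Num.sqrt.
by apply: eq_bigr => j _; apply: eq_bigr => i _; rewrite mxE.
Qed.

Lemma entry_le_frob n r (A : 'M[R]_(n, r)) i j : `|A i j| <= frob A.
Proof.
apply: le_sqrtr => //; rewrite real_normK ?num_real // (bigD1 i) //= (bigD1 j) //=.
by rewrite -addrA lerDl addr_ge0 ?sumr_sqr_ge0 // sumr_ge0 // => *; apply: sumr_sqr_ge0.
Qed.

Lemma frob_stiefel_mulTmx_le n r k (P : 'M[R]_(n, r)) (D : 'M[R]_(n, k)) :
  P^T *m P = 1%:M -> frob (P^T *m D) <= frob D.
Proof.
move=> PtP; rewrite -ler_sqr ?nnegrE ?frob_ge0 // !frob_sqr_mxtrace -subr_ge0.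
pose E := D - P *m (P^T *m D).
(* Bessel: D^T D - (P^T D)^T (P^T D) = E^T E, where E is the residual of
   projecting D onto the range of P. *)
have -> : \tr (D^T *m D) - \tr ((P^T *m D)^T *m (P^T *m D)) = \tr (E^T *m E).
  rewrite -linearB; congr (\tr _); rewrite /E !raddfB /= !trmx_mul trmxK.
  rewrite !mulmxBl !mulmxA -[D^T *m P *m P^T *m P]mulmxA PtP mulmx1.
  by rewrite subrr subr0.
by rewrite -frob_sqr_mxtrace sqr_ge0.
Qed.

Lemma frob_gram_le n r (D : 'M[R]_(n, r)) : frob (D^T *m D) <= frob D ^+ 2.
Proof.
apply: sqrtr_le; first exact: sqr_ge0.
rewrite frob_sqr_col expr2 mulr_suml; apply: ler_sum => j _.
rewrite mulr_sumr; apply: ler_sum => k _; rewrite !mxE.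
under eq_bigr do rewrite mxE.
exact: CauchySchwarz_sum.
Qed.

Lemma frob_gram_sub1_le n r (A P : 'M[R]_(n, r)) : P^T *m P = 1%:M ->
  frob (A^T *m A - 1%:M) <= 2 * frob (A - P) + frob (A - P) ^+ 2.
Proof.
move=> PtP; rewrite -[in A^T *m A](subrK P A); move: (A - P) => D.
have -> : (D + P)^T *m (D + P) - 1%:M = P^T *m D + (P^T *m D)^T + D^T *m D.
  rewrite [(D + P)^T]raddfD /= mulmxDl !mulmxDr PtP trmx_mul trmxK.
  by rewrite addrA addrK addrC [_ + D^T *m P]addrC addrA.
apply: le_trans (ler_frobD _ _) _; apply: lerD; last exact: frob_gram_le.
apply: le_trans (ler_frobD _ _) _; rewrite frob_trmx mulr2n mulrDl mul1r.
by apply: lerD; apply: frob_stiefel_mulTmx_le.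
Qed.

Lemma l2norm_colB_le_frob n r (A B : 'M[R]_(n, r)) (P : pred 'I_n) j :
  l2norm P (fun i => A i j - B i j) <= frob (A - B).
Proof.
rewrite ler_sqrt; last by rewrite sumr_ge0 // => i _; apply: sumr_sqr_ge0.
apply: (@le_trans _ _ (\sum_(i | P i) (A - B) i j ^+ 2)).
  by apply: ler_sum => i _; rewrite !mxE.
apply: (@le_trans _ _ (\sum_i (A - B) i j ^+ 2)).
  by rewrite [X in _ <= X](bigID P) /= lerDl sumr_sqr_ge0.
by apply: ler_sum => i _; rewrite (bigD1 j) //= lerDl sumr_sqr_ge0.
Qed.

Lemma l2norm_col_norm_sub1_le n r (A P : 'M[R]_(n, r)) : P^T *m P = 1%:M ->
  l2norm predT (fun j => l2norm predT (fun i => A i j) - 1) <= frob (A - P).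
Proof.
move=> PtP; rewrite /frob exchange_big ler_sqrt /=; last first.
  by rewrite sumr_ge0 // => j _; apply: sumr_sqr_ge0.
apply: ler_sum => j _; rewrite -(l2norm_stiefel_col PtP j) -real_normK ?num_real //.
rewrite -(l2norm_sqr predT) ler_sqr ?nnegrE ?l2norm_ge0 //.
apply: le_trans (l2normB _ _ _) _.
by apply: ler_l2norm => i _; rewrite !mxE.
Qed.

End Frobenius.

Section Distance.
Variables (R : realType) (n r : nat).
Implicit Types (X Z : 'M[R]_(n, r)) (S : set 'M[R]_(n, r)).

Lemma dist_le_frob X S Z : S Z -> dist X S <= frob (X - Z).
Proof.
move=> SZ; apply: ge_inf; last by exists Z.
by exists 0 => _ [Z' _ <-]; apply: frob_ge0.
Qed.

Lemma le_dist X S x : S !=set0 -> (forall Z, S Z -> x <= frob (X - Z)) ->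
  x <= dist X S.
Proof.
move=> [Z0 SZ0] le_x; apply: lb_le_inf; first by exists (frob (X - Z0)), Z0.
by move=> _ [Z SZ <-]; apply: le_x.
Qed.

Lemma dist_le_add_dist X S T (K d : R) : T !=set0 -> 0 < K ->
  (forall Z, T Z -> dist X S <= K * (d + frob (X - Z))) ->
  dist X S <= K * (d + dist X T).
Proof.
move=> T_neq0 K_gt0 le_K; rewrite -ler_pdivrMl // -lerBlDl.
by apply: le_dist => // Z TZ; rewrite lerBlDl ler_pdivrMl // le_K.
Qed.

Definition pos_part X : 'M[R]_(n, r) := \matrix_(i, j) Num.max (X i j) 0.

Lemma pos_part_ge0 X i j : 0 <= pos_part X i j.
Proof. by rewrite mxE le_max lexx orbT. Qed.

Lemma le_pos_part X i j : X i j <= pos_part X i j.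
Proof. by rewrite mxE le_max lexx. Qed.

Lemma pos_part_nearer X Z : (forall i j, 0 <= Z i j) ->
  frob (X - pos_part X) <= frob (X - Z) /\ frob (pos_part X - Z) <= frob (X - Z).
Proof.
move=> Z_ge0; split; apply: frob_le => i j; rewrite !mxE; have := Z_ge0 i j;
  by case: (leP (X i j) 0) => x0 z0; rewrite ?subrr ?expr0n ?sqr_ge0 //; nra.
Qed.

Lemma dist_nonneg_mx X : dist X (@nonneg_mx R n r) = frob (X - pos_part X).
Proof.
apply/eqP; rewrite eq_le dist_le_frob; last exact: pos_part_ge0.
rewrite le_dist // => [|Z Z_ge0]; first by exists 0 => i j; rewrite mxE.
by case: (pos_part_nearer X Z_ge0).
Qed.

End Distance.

Section SupportColumn.
Variables (R : rcfType) (n r : nat) (Xb : 'M[R]_(n, r)).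
Hypotheses (Xb_ge0 : forall i j, 0 <= Xb i j) (XbtXb : Xb^T *m Xb = 1%:M).
Variable j0 : 'I_r.

(* Rows of zeros are sent to the arbitrary column j0. *)
Definition supp_col i : 'I_r := if [pick j | Xb i j != 0] is Some j then j else j0.

Lemma nonneg_stiefel_row_orth i j k : j != k -> Xb i j * Xb i k = 0.
Proof.
move=> jk; have := stiefel_dot XbtXb j k; rewrite (negbTE jk) => /eqP.
rewrite psumr_eq0 => [/allP /(_ i (mem_index_enum _)) /eqP //|i' _].
exact: mulr_ge0.
Qed.

Lemma supp_colP i j : Xb i j != 0 -> supp_col i = j.
Proof.
move=> Xij; rewrite /supp_col; case: pickP => [k Xik|]; last by move=> /(_ j); rewrite Xij.
apply/eqP; apply: contraT => kj; have /eqP := nonneg_stiefel_row_orth i kj.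
by rewrite mulf_eq0 (negbTE Xik) (negbTE Xij).
Qed.

Lemma off_supp_col i j : supp_col i != j -> Xb i j = 0.
Proof. by apply: contraNeq => /supp_colP ->. Qed.

Lemma supp_col_sqr j : \sum_(i | supp_col i == j) Xb i j ^+ 2 = 1.
Proof.
rewrite -(stiefel_col_sqr XbtXb j) [RHS](bigID (fun i => supp_col i == j)) /=.
by rewrite [X in _ = _ + X]big1 ?addr0 // => i /off_supp_col ->; rewrite expr0n.
Qed.

Lemma supp_col_entry_eq1 i : \sum_j Xb i j ^+ 2 = 1 -> Xb i (supp_col i) = 1.
Proof.
rewrite (bigD1 (supp_col i)) //= big1 ?addr0 => [|j ij]; last first.
  by rewrite off_supp_col ?expr0n // eq_sym.
have := Xb_ge0 i (supp_col i); move: (Xb i _) => x x_ge0 /eqP.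
by rewrite sqrf_eq1 => /orP[/eqP //|/eqP x1]; move: x_ge0; rewrite x1 oppr_ge0 ler10.
Qed.

End SupportColumn.

Section Constants.
Variable R : realType.

Lemma min_nonzero_entry_le n r (A : 'M[R]_(n, r)) i j :
  (forall i j, 0 <= A i j) -> A i j != 0 -> min_nonzero_entry A <= A i j.
Proof.
move=> A_ge0 Aij; apply: ge_inf; last by exists i, j.
by exists 0 => _ [i' [j' [_ ->]]].
Qed.

Lemma min_nonzero_entry_gt0 n r (A : 'M[R]_(n, r)) i j :
  (forall i j, 0 <= A i j) -> A i j != 0 -> 0 < min_nonzero_entry A.
Proof.
move=> A_ge0 Aij.
apply: (@lt_le_trans _ _ (\big[Num.min/1]_(p | A p.1 p.2 != 0) A p.1 p.2)).
  by apply: lt_bigmin => // p Ap; rewrite lt_def Ap A_ge0.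
apply: lb_le_inf; first by exists (A i j), i, j.
move=> _ [i' [j' [Aij' ->]]].
exact: (@bigmin_le_cond _ _ _ 1 (i', j') _ (fun p => A p.1 p.2)).
Qed.

Lemma sqrt_nat_ge k : (2 <= k)%N -> 141 / 100 <= Num.sqrt (k%:R : R).
Proof. by move=> k_ge2; apply: le_sqrtr => //; move: k_ge2; rewrite -(ler_nat R); lra. Qed.

Lemma kappa_ge1_r1 n r (Xb : 'M[R]_(n, r)) : r = 1%N -> 1 <= kappa Xb.
Proof.
move=> r1; rewrite /kappa (introT eqP r1); case: ifP => [/eqP n_eq_r|_] //.
by rewrite n_eq_r r1 sqrtr1; lra.
Qed.

Lemma kappa_square_ge n r (Xb : 'M[R]_(n, r)) :
  n = r -> (1 < r)%N -> 29 / 10 <= kappa Xb.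
Proof.
move=> n_eq_r r_gt1; rewrite /kappa (introT eqP n_eq_r) /= n_eq_r.
by have := sqrt_nat_ge r_gt1; lra.
Qed.

Lemma kappa_rect_ge n r (Xb : 'M[R]_(n, r)) : (r < n)%N -> (1 < r)%N ->
  0 < min_nonzero_entry Xb -> 20 / min_nonzero_entry Xb <= kappa Xb.
Proof.
move=> r_lt_n r_gt1 m_gt0; rewrite /kappa (gtn_eqF r_lt_n) (gtn_eqF r_gt1).
rewrite ler_pM2r ?invr_gt0 //; have := sqrt_nat_ge r_gt1.
have : 7 <= 1 + 3 * r%:R * (n - r)%:R :> R.
  have : 2%:R <= r%:R :> R by rewrite ler_nat.
  have : 1%:R <= (n - r)%:R :> R by rewrite ler_nat subn_gt0.
  nra.
nra.
Qed.

Lemma kappa_spec n r (Xb : 'M[R]_(n, r)) (j0 : 'I_r) :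
  (forall i j, 0 <= Xb i j) -> Xb^T *m Xb = 1%:M -> (r <= n)%N ->
  ((r < n)%N -> (1 < r)%N -> forall i, exists j, Xb i j != 0) ->
  exists m c : R, [/\ 0 < m <= 1, Num.sqrt (1 + c ^+ 2) <= kappa Xb + 1,
    (r = 1)%N -> 1 <= c &
    (1 < r)%N -> 16 / 5 <= m * c /\ forall i, m <= Xb i (supp_col Xb j0 i)].
Proof.
move=> Xb_ge0 XbtXb r_le_n rows_nz.
have [r1|r_neq1] := eqVneq r 1%N.
  exists 1, 1; have := kappa_ge1_r1 Xb r1.
  split=> [||//|r_gt1]; [by rewrite ltr01 lexx | apply: sqrtr_le; nra |].
  by rewrite r1 in r_gt1.
have r_gt1 : (1 < r)%N by rewrite ltn_neqAle eq_sym r_neq1 (leq_trans _ (ltn_ord j0)).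
have [n_eq_r|n_neq_r] := eqVneq n r.
  exists 1, (16 / 5); have := kappa_square_ge Xb n_eq_r r_gt1.
  split=> [||_|_]; [by rewrite ltr01 lexx | apply: sqrtr_le; nra | lra |].
  split=> [|i]; first lra.
  by rewrite supp_col_entry_eq1 // square_stiefel_row_sqr.
have r_lt_n : (r < n)%N by rewrite ltn_neqAle eq_sym n_neq_r r_le_n.
have supp_nz i : Xb i (supp_col Xb j0 i) != 0.
  by have [j Xij] := rows_nz r_lt_n r_gt1 i; rewrite (supp_colP Xb_ge0 XbtXb j0 Xij).
pose i0 := Ordinal (leq_ltn_trans (leq0n r) r_lt_n).
set m := min_nonzero_entry Xb.
have m_gt0 : 0 < m := min_nonzero_entry_gt0 Xb_ge0 (supp_nz i0).
have m_le_supp i : m <= Xb i (supp_col Xb j0 i) := min_nonzero_entry_le Xb_ge0 (supp_nz i).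
have m_le1 : m <= 1.
  apply: le_trans (m_le_supp i0) _; have := Xb_ge0 i0 (supp_col Xb j0 i0).
  by have := stiefel_entry_sqr_le1 XbtXb i0 (supp_col Xb j0 i0); nra.
have c_ge0 : 0 <= 16 / 5 / m by apply: divr_ge0; [lra | exact: ltW].
have c_le_kappa : 16 / 5 / m <= kappa Xb.
  apply: le_trans _ (kappa_rect_ge r_lt_n r_gt1 m_gt0).
  by rewrite ler_pM2r ?invr_gt0 //; lra.
exists m, (16 / 5 / m); split=> [||r1|_]; first by rewrite m_gt0 m_le1.
- by apply: sqrtr_le; nra.
- by rewrite r1 in r_neq1.
- by split=> //; rewrite mulrCA divff ?mulr1 ?gt_eqF.
Qed.
End Constants.

Lemma off_supp_arith (R : realFieldType) (m s t : R) :
  0 < m <= 1 -> 0 <= s <= m / 50 -> 0 <= t ->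
  99 / 100 * m * t <= 2 * s + s ^+ 2 -> m * (t + t ^+ 2 + s) <= 16 / 5 * s.
Proof.
move=> /andP[m_gt0 m_le1] /andP[s_ge0 s_le] t_ge0 mt_le.
have mt : m * t <= 205 / 100 * s by nra.
have t_small : t <= 41 / 1000 by nra.
have mt2 : m * t ^+ 2 <= 9 / 100 * s by nra.
nra.
Qed.

Section SupportProjection.
Variables (R : realType) (n r : nat) (Xb : 'M[R]_(n, r)).
Hypotheses (Xb_ge0 : forall i j, 0 <= Xb i j) (XbtXb : Xb^T *m Xb = 1%:M).
Variables (j0 : 'I_r) (X : 'M[R]_(n, r)).

Local Notation col := (supp_col Xb j0).
Local Notation W := (pos_part X).

Definition supp_norm j := l2norm [pred i | col i == j] (fun i => W i j).

Definition supp_proj : 'M[R]_(n, r) :=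
  \matrix_(i, j) if col i == j then W i j / supp_norm j else 0.

Definition off_supp j := \sum_(i | col i != j) W i j ^+ 2.

Definition off_supp_mass := \sum_j off_supp j.

Local Notation Y := supp_proj.
Local Notation rho := supp_norm.

Lemma supp_norm_ge j : 1 - frob (X - Xb) <= rho j.
Proof.
have Xb_supp : l2norm [pred i | col i == j] (fun i => Xb i j) = 1.
  by rewrite /l2norm supp_col_sqr // sqrtr1.
have dev_le : l2norm [pred i | col i == j] (fun i => Xb i j - W i j) <= frob (X - Xb).
  apply: le_trans (l2norm_colB_le_frob _ _ _ _) _.
  by rewrite frob_distC; case: (pos_part_nearer X Xb_ge0).
have := l2normB [pred i | col i == j] (fun i => Xb i j) (fun i => W i j).
rewrite Xb_supp => /(le_trans (ler_norm _)) le_dev.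
by rewrite lerBlDl -lerBlDr; apply: le_trans le_dev dev_le.
Qed.

Lemma frob_sub_supp_proj :
  frob (X - Y) ^+ 2 = frob (X - W) ^+ 2 + frob (W - Y) ^+ 2.
Proof.
rewrite !frob_sqr -big_split /=; apply: eq_bigr => i _; rewrite -big_split /=.
apply: eq_bigr => j _; rewrite !mxE.
(* X - W and W - Y have disjoint supports: W and Y vanish where X is negative. *)
have [_|_] := leP (X i j) 0; last by rewrite subrr expr0n add0r.
by rewrite mul0r if_same subrr expr0n addr0.
Qed.

Lemma off_supp_mass_r1 : r = 1%N -> off_supp_mass = 0.
Proof.
move=> r1; rewrite /off_supp_mass big1 // => j _; rewrite /off_supp big_pred0 // => i.
apply/negbTE; rewrite negbK; case: (col i) j => [a a_lt] [b b_lt].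
apply/eqP/val_inj => /=; move: a_lt b_lt; rewrite r1 !ltnS !leqn0.
by move=> /eqP -> /eqP ->.
Qed.

Lemma gram_offdiag_ge j k : j != k ->
  \sum_(i | col i == k) (W i j * W i k) ^+ 2 <= (W^T *m W - 1%:M) j k ^+ 2.
Proof.
move=> jk; have W2_ge0 i : 0 <= W i j * W i k by rewrite mulr_ge0 ?pos_part_ge0.
have -> : (W^T *m W - 1%:M) j k = \sum_i W i j * W i k.
  by rewrite !mxE (negbTE jk) subr0; apply: eq_bigr => i _; rewrite !mxE.
apply: le_trans (sumr_sqr_le (f := fun i => W i j * W i k) (fun i _ => W2_ge0 i)) _.
rewrite ler_sqr ?nnegrE ?sumr_ge0 // [X in _ <= X](bigID (fun i => col i == k)) /=.
by rewrite lerDl sumr_ge0.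
Qed.

Lemma off_supp_mass_le m : 0 < m -> (forall i, m <= W i (col i)) ->
  m ^+ 2 * off_supp_mass <= frob (W^T *m W - 1%:M) ^+ 2.
Proof.
(* An off-support entry W i j meets W i (col i) >= m in the Gram entry (j, col i). *)
move=> m_gt0 m_le; rewrite frob_sqr mulr_sumr; apply: ler_sum => j _.
rewrite /off_supp mulr_sumr.
apply: (@le_trans _ _ (\sum_(i | col i != j) (W i j * W i (col i)) ^+ 2)).
  apply: ler_sum => i _; rewrite exprMn mulrC ler_wpM2l ?sqr_ge0 //.
  by rewrite ler_sqr ?nnegrE ?(ltW m_gt0) ?pos_part_ge0 ?m_le.
rewrite (partition_big col (fun k => k != j)) //= [X in _ <= X](bigD1 j) //=.
rewrite -[X in X <= _]add0r; apply: lerD; first exact: sqr_ge0.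
apply: ler_sum => k kj; rewrite eq_sym in kj.
rewrite (eq_bigl (fun i => col i == k)) => [|i]; last first.
  by case: (eqVneq (col i) k) => [->|]; rewrite ?andbF // eq_sym kj.
rewrite (eq_bigr (fun i => (W i j * W i k) ^+ 2)) => [|i /eqP -> //].
exact: gram_offdiag_ge.
Qed.

Hypothesis X_near : frob (X - Xb) <= 1 / 2.

Lemma supp_norm_ge_half j : 1 / 2 <= rho j.
Proof. by apply: le_trans _ (supp_norm_ge j); move: X_near; set d := frob _; lra. Qed.

Lemma supp_norm_gt0 j : 0 < rho j.
Proof. by apply: lt_le_trans _ (supp_norm_ge_half j); lra. Qed.

Lemma supp_proj_nonneg_stiefel : nonneg_stiefel Y.
Proof.
split=> [i j|].
  rewrite mxE; case: eqP => _ //.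
  by apply: divr_ge0; [apply: pos_part_ge0 | apply/ltW/supp_norm_gt0].
apply/matrixP => j k; rewrite !mxE.
have [<-|jk] := eqVneq j k.
  rewrite (bigID (fun i => col i == j)) /= [X in _ + X]big1 => [|i /negbTE ij]; last first.
    by rewrite [Y _ _]mxE ij mulr0.
  transitivity (\sum_(i | col i == j) W i j ^+ 2 / rho j ^+ 2).
    rewrite addr0; apply: eq_bigr => i /eqP ij.
    by rewrite [Y^T _ _]mxE [Y _ _]mxE ij eqxx -expr2 expr_div_n.
  by rewrite -mulr_suml -l2norm_sqr divff // sqrf_eq0 gt_eqF ?supp_norm_gt0.
rewrite big1 // => i _; rewrite !mxE.
by case: (eqVneq (col i) j) => [-> | _]; rewrite ?mul0r // (negbTE jk) mulr0.
Qed.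

Lemma frob_pos_sub_supp_proj_sqr :
  frob (W - Y) ^+ 2 = off_supp_mass + \sum_j (rho j - 1) ^+ 2.
Proof.
rewrite frob_sqr_col -big_split /=; apply: eq_bigr => j _.
rewrite (bigID (fun i => col i == j)) /= addrC; congr (_ + _).
  by apply: eq_bigr => i /negbTE ij; rewrite !mxE ij subr0.
transitivity (\sum_(i | col i == j) W i j ^+ 2 * (1 - (rho j)^-1) ^+ 2).
  by apply: eq_bigr => i /eqP ij; rewrite !mxE ij eqxx; ring.
have rho_neq0 : rho j != 0 := lt0r_neq0 (supp_norm_gt0 j).
by rewrite -mulr_suml -l2norm_sqr (_ : l2norm _ _ = rho j) //; field.
Qed.

Variable P : 'M[R]_(n, r).
Hypothesis PtP : P^T *m P = 1%:M.

Lemma supp_norm_near_col_norm j :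
  `|rho j - l2norm predT (fun i => W i j)| <= off_supp j.
Proof.
set c := l2norm predT _.
have c_sqr : c ^+ 2 = rho j ^+ 2 + off_supp j.
  by rewrite !l2norm_sqr (bigID (fun i => col i == j)).
have := sumr_sqr_ge0 [pred i | col i != j] (fun i => W i j).
have := supp_norm_ge_half j; have := l2norm_ge0 predT (fun i => W i j).
rewrite -/c -/(off_supp j) => c_ge0 rho_ge off_ge0.
(* c - rho = off / (c + rho) and c + rho >= 1 *)
have rho_le_c : rho j <= c by rewrite -ler_sqr ?nnegrE ?c_sqr ?lerDl //; lra.
by rewrite ler_norml; apply/andP; split; nra.
Qed.

Lemma frob_pos_sub_supp_proj_le :
  frob (W - Y) <= Num.sqrt off_supp_mass + off_supp_mass + frob (W - P).
Proof.
pose c j := l2norm predT (fun i => W i j).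
have O_ge0 : 0 <= off_supp_mass by apply: sumr_ge0 => j _; apply: sumr_sqr_ge0.
rewrite -(ger0_norm (frob_ge0 _)) -sqrtr_sqr frob_pos_sub_supp_proj_sqr.
apply: le_trans (sqrtrD_le O_ge0 (sumr_sqr_ge0 _ _)) _; rewrite -addrA lerD2l.
change (l2norm predT (fun j => rho j - 1) <= off_supp_mass + frob (W - P)).
rewrite (@eq_l2norm _ _ _ _ (fun j => (rho j - c j) + (c j - 1))) => [|j _]; last first.
  by rewrite addrA subrK.
apply: le_trans (l2normD _ _ _) _; apply: lerD; last exact: l2norm_col_norm_sub1_le.
rewrite /l2norm; apply: sqrtr_le; first exact: O_ge0.
apply: (@le_trans _ _ (\sum_j off_supp j ^+ 2)); last first.
  by apply: sumr_sqr_le => j _; apply: sumr_sqr_ge0.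
apply: ler_sum => j _; rewrite -real_normK ?num_real // ler_sqr ?nnegrE ?sumr_sqr_ge0 //.
exact: supp_norm_near_col_norm.
Qed.

Lemma frob_pos_sub_supp_proj_le_supp m :
  0 < m <= 1 -> frob (X - Xb) <= m / 100 -> frob (W - P) <= m / 50 ->
  (forall i, m <= Xb i (col i)) -> m * frob (W - Y) <= 16 / 5 * frob (W - P).
Proof.
move=> m_bounds near_Xb near_P m_le_supp; have /andP[m_gt0 m_le1] := m_bounds.
have m'_gt0 : 0 < 99 / 100 * m by lra.
have W_supp i : 99 / 100 * m <= W i (col i).
  apply: le_trans (le_pos_part X i (col i)).
  have := entry_le_frob (X - Xb) i (col i); rewrite !mxE ler_norml => /andP[lo _].
  by have := m_le_supp i; move: near_Xb lo; set d := frob _; lra.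
set s := frob (W - P); have s_ge0 : 0 <= s := frob_ge0 _.
have O_ge0 : 0 <= off_supp_mass by apply: sumr_ge0 => j _; apply: sumr_sqr_ge0.
have sqrtO_le : 99 / 100 * m * Num.sqrt off_supp_mass <= 2 * s + s ^+ 2.
  have := off_supp_mass_le m'_gt0 W_supp; have := frob_gram_sub1_le W PtP.
  have := frob_ge0 (W^T *m W - 1%:M); have := sqr_sqrtr O_ge0; have := sqrtr_ge0 off_supp_mass.
  rewrite -/s; set g := frob _; set t := Num.sqrt _ => t_ge0 t2 g_ge0 g_le O_le.
  rewrite -t2 in O_le; nra.
have s_bounds : 0 <= s <= m / 50 by rewrite s_ge0 near_P.
have := off_supp_arith m_bounds s_bounds (sqrtr_ge0 _) sqrtO_le.
by rewrite sqr_sqrtr //; apply: le_trans; rewrite ler_pM2l // frob_pos_sub_supp_proj_le.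
Qed.

Lemma frob_pos_sub_supp_proj_bound m c :
  0 < m <= 1 -> frob (X - Xb) <= m / 100 -> frob (X - P) <= m / 100 ->
  ((r = 1)%N -> 1 <= c) ->
  ((1 < r)%N -> 16 / 5 <= m * c /\ forall i, m <= Xb i (col i)) ->
  frob (W - Y) <= c * (frob (X - W) + frob (X - P)).
Proof.
move=> m_bounds near_Xb near_P c_r1 c_supp.
have s_le : frob (W - P) <= frob (X - W) + frob (X - P).
  by rewrite -(subrKA X) frob_distC; apply: ler_frobD.
have eb_ge0 : 0 <= frob (X - W) + frob (X - P) by rewrite addr_ge0 ?frob_ge0.
have [r1|r_neq1] := eqVneq r 1%N.
  have := frob_pos_sub_supp_proj_le; rewrite off_supp_mass_r1 // sqrtr0 !add0r.
  by move/le_trans/(_ s_le)/le_trans; apply; rewrite ler_peMl ?c_r1.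
have r_gt1 : (1 < r)%N by rewrite ltn_neqAle eq_sym r_neq1 (leq_trans _ (ltn_ord j0)).
have [mc_ge m_le_supp] := c_supp r_gt1; have /andP[m_gt0 _] := m_bounds.
have s_small : frob (W - P) <= m / 50.
  have : frob (X - W) <= frob (X - Xb) by case: (pos_part_nearer X Xb_ge0).
  move: near_Xb near_P s_le; set d := frob (X - Xb); set b := frob (X - P).
  by set e := frob (X - W); set s := frob (W - P); lra.
rewrite -(ler_pM2l m_gt0) mulrA.
apply: le_trans (frob_pos_sub_supp_proj_le_supp m_bounds near_Xb s_small m_le_supp) _.
apply: le_trans _ (ler_wpM2r eb_ge0 mc_ge).
by apply: ler_wpM2l s_le; lra.
Qed.

Lemma dist_nonneg_stiefel_le m c :
  0 < m <= 1 -> frob (X - Xb) <= m / 100 -> frob (X - P) <= m / 100 ->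
  ((r = 1)%N -> 1 <= c) ->
  ((1 < r)%N -> 16 / 5 <= m * c /\ forall i, m <= Xb i (col i)) ->
  dist X (@nonneg_stiefel R n r) <=
    Num.sqrt (1 + c ^+ 2) * (dist X (@nonneg_mx R n r) + frob (X - P)).
Proof.
move=> m_bounds near_Xb near_P c_r1 c_supp.
apply: le_trans (dist_le_frob _ supp_proj_nonneg_stiefel) _.
rewrite dist_nonneg_mx -(ger0_norm (frob_ge0 (X - Y))) -sqrtr_sqr frob_sub_supp_proj.
have := frob_pos_sub_supp_proj_bound m_bounds near_Xb near_P c_r1 c_supp.
have := frob_ge0 (X - W); have := frob_ge0 (X - P); have := frob_ge0 (W - Y).
have := sqr_sqrtr (addr_ge0 ler01 (sqr_ge0 c)); have := sqrtr_ge0 (1 + c ^+ 2).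
set t := Num.sqrt _; set e := frob (X - W); set b := frob (X - P); set q := frob (W - Y).
move=> t_ge0 t2 q_ge0 b_ge0 e_ge0 q_le.
apply: sqrtr_le; first by rewrite mulr_ge0 ?addr_ge0.
have -> : (t * (e + b)) ^+ 2 = (1 + c ^+ 2) * (e + b) ^+ 2 by rewrite -t2; ring.
have : q ^+ 2 <= (c * (e + b)) ^+ 2 by rewrite ler_sqr ?nnegrE //; apply: le_trans q_le.
nra.
Qed.

End SupportProjection.

Theorem proposition3p3 (R : realType) (n r : nat) (Xb : 'M[R]_(n, r)) :
  (1 <= r)%N -> (r <= n)%N ->
  @nonneg_stiefel R n r Xb ->
  ((r < n)%N -> (1 < r)%N -> forall i : 'I_n, exists j : 'I_r, Xb i j != 0) ->
  exists delta : R, 0 < delta /\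
    forall X : 'M[R]_(n, r), frob (X - Xb) <= delta ->
      dist X (@nonneg_stiefel R n r) <=
        (kappa Xb + 1) * (dist X (@nonneg_mx R n r) + dist X (@stiefel R n r)).
Proof.
move=> r_gt0 r_le_n [Xb_ge0 XbtXb] rows_nz; pose j0 := Ordinal r_gt0.
have [m [c [m_bounds sqrt_le_K c_r1 c_supp]]] := kappa_spec j0 Xb_ge0 XbtXb r_le_n rows_nz.
have /andP[m_gt0 m_le1] := m_bounds.
have K_ge1 : 1 <= kappa Xb + 1.
  by apply: le_trans (le_sqrtr ler01 _) sqrt_le_K; rewrite expr1n lerDl sqr_ge0.
exists (m / 100); split=> [|X near_Xb]; first lra.
have X_near : frob (X - Xb) <= 1 / 2 by move: near_Xb; set d := frob _; lra.
apply: dist_le_add_dist => [||P PtP]; [by exists Xb | lra |].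
have [far_P|near_P] := ltP (m / 100) (frob (X - P)).
  apply: le_trans (dist_le_frob _ (conj Xb_ge0 XbtXb)) _.
  rewrite dist_nonneg_mx; have := frob_ge0 (X - pos_part X).
  by move: near_Xb far_P; set d := frob (X - Xb); set b := frob (X - P); nra.
apply: le_trans (dist_nonneg_stiefel_le Xb_ge0 XbtXb X_near PtP m_bounds
  near_Xb near_P c_r1 c_supp) _.
by rewrite ler_wpM2r // dist_nonneg_mx addr_ge0 ?frob_ge0.
Qed.
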